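(* Let $k\ge 2$ and let $\overline{x}_1,\dots,\overline{x}_p\in\Sigma_k^*$ form a $p$-cycle of $\mathcal P_k$, i.e. $\overline{x}_{i}=\mathcal P_k(\overline{x}_{i-1})$ for $i=1,\dots,p$, with indices taken modulo $p$ (so $\overline{x}_0=\overline{x}_p$). For each $i$, let $b_{1,i}>\dots>b_{r_i,i}$ be the letters occurring in $\overline{x}_{i-1}$, and let $n_{(j,i)}=\lfloor\log_k |\overline{x}_{i-1}|_{b_{j,i}}\rfloor$, so that $\overline{x}_i=A_{1,i}b_{1,i}\cdots A_{r_i,i}b_{r_i,i}$ with $A_{j,i}=[|\overline{x}_{i-1}|_{b_{j,i}}]_k$ a word of length $n_{(j,i)}+1$ with nonzero first letter. Then \[\sum_{i=1}^{p}\sum_{j=1}^{r_i} n_{(j,i)}\;\ge\;\sum_{i=1}^{p}\sum_{j=1}^{r_i}k^{n_{(j,i)}}-2\sum_{i=1}^{p} r_i .\] (In particular, if all $r_i$ equal a common value $r$, the right-hand side is $\sum_{i,j}k^{n_{(j,i)}}-2pr$.)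
   Context: Fix an integer $k\ge 2$ and the alphabet $\Sigma_k=\{0,1,\dots,k-1\}$. A word is a finite nonempty string of letters of $\Sigma_k$ (leading zeros allowed); $\Sigma_k^*$ denotes the set of words. For a word $x$, $|x|$ denotes its length and $|x|_i$ the number of occurrences of the letter $i$ in $x$. For a positive integer $c$, $[c]_k$ denotes its standard base-$k$ representation without leading zeros, viewed as a word over $\Sigma_k$; it has $\lfloor\log_k c\rfloor+1$ letters. The map $\mathcal P_k:\Sigma_k^*\to\Sigma_k^*$ is defined as follows: if $b_1>b_2>\dots>b_r$ are exactly the letters occurring in $x$ (i.e. those with $|x|_{b_j}\neq 0$), then $\mathcal P_k(x)=[|x|_{b_1}]_k\,b_1\,[|x|_{b_2}]_k\,b_2\cdots[|x|_{b_r}]_k\,b_r$ (concatenation). A $p$-cycle is a list of words $\overline x_1,\dots,\overline x_p$ with $\mathcal P_k(\overline x_{i})=\overline x_{i+1}$ for $1\le i<p$ and $\mathcal P_k(\overline x_p)=\overline x_1$. *)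

From mathcomp Require Import all_boot.
Set Implicit Arguments. Unset Strict Implicit. Unset Printing Implicit Defensive.

Definition is_word (k : nat) (x : seq nat) : bool :=
  (x != [::]) && all (fun a => a < k) x.

(* [c]_k : standard base-k representation of c > 0, most significant digit
   first, of length trunc_log k c + 1 = floor(log_k c) + 1. *)
Definition base_repr (k c : nat) : seq nat :=
  [seq (c %/ k ^ (trunc_log k c - i)) %% k | i <- iota 0 (trunc_log k c).+1].

Definition letters (k : nat) (x : seq nat) : seq nat :=
  [seq b <- rev (iota 0 k) | b \in x].

Definition Pk (k : nat) (x : seq nat) : seq nat :=
  flatten [seq base_repr k (count_mem b x) ++ [:: b] | b <- letters k x].

From mathcomp Require Import all_boot.

Set Implicit Arguments.
Unset Strict Implicit.
Unset Printing Implicit Defensive.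

(* Writing a multiplicity c in base k costs trunc_log k c + 1 letters and
   c >= k ^ trunc_log k c, so |x| >= sum_j k ^ n_j while
   |P_k x| = sum_j n_j + 2 r. Summing over a cycle, the total length of the
   words equals the total length of their images, which gives the inequality. *)

Lemma sum_count_mem (T : eqType) (s x : seq T) :
  uniq s -> {subset x <= s} -> \sum_(b <- s) count_mem b x = size x.
Proof.
move=> uniq_s; elim: x => [|a x IH] sub_xs; first by rewrite big1.
rewrite big_split /= IH => [|y xy]; last by rewrite sub_xs // inE xy orbT.
have -> : \sum_(b <- s) (a == b) = count_mem a s.
  rewrite -sum1_count [RHS]big_mkcond.
  by apply: eq_bigr => b _; rewrite /= eq_sym; case: eqP.
by rewrite count_uniq_mem // sub_xs // mem_head.
Qed.

Lemma sum_count_letters k x : all (fun a => a < k) x ->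
  \sum_(b <- letters k x) count_mem b x = size x.
Proof.
move=> /allP x_lt_k; apply: sum_count_mem.
  by rewrite filter_uniq // rev_uniq iota_uniq.
by move=> b xb; rewrite mem_filter xb mem_rev mem_iota x_lt_k.
Qed.

Lemma sum_pow_trunc_log_letters k x : 1 < k -> all (fun a => a < k) x ->
  \sum_(b <- letters k x) k ^ trunc_log k (count_mem b x) <= size x.
Proof.
move=> k_gt1 x_lt_k; rewrite -(sum_count_letters x_lt_k) !big_seq.
apply: leq_sum => b; rewrite mem_filter => /andP[xb _].
by rewrite trunc_logP // -has_count has_pred1.
Qed.

Lemma size_base_repr k c : size (base_repr k c) = (trunc_log k c).+1.
Proof. by rewrite size_map size_iota. Qed.

Lemma size_Pk k x : size (Pk k x) =
  \sum_(b <- letters k x) trunc_log k (count_mem b x) + 2 * size (letters k x).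
Proof.
rewrite /Pk size_flatten sumnE /shape -map_comp big_map -sum1_size big_distrr.
rewrite -big_split; apply: eq_bigr => b _.
by rewrite [LHS]size_cat size_base_repr /= muln1 addn1 addn2.
Qed.

Lemma big_ord_succ_mod (R : Type) (idx : R) (op : Monoid.com_law idx)
    p (F : nat -> R) :
  0 < p -> \big[op/idx]_(i < p) F (i.+1 %% p) = \big[op/idx]_(i < p) F i.
Proof.
case: p => // p _; rewrite big_ord_recr big_ord_recl /= modnn Monoid.mulmC.
by congr (op _); apply: eq_bigr => i _; rewrite modn_small // ltnS.
Qed.

Theorem theorem3 (k p : nat) (xs : nat -> seq nat) :
  2 <= k -> 0 < p ->
  (forall i, i < p -> is_word k (xs i)) ->
  (forall i, i < p -> Pk k (xs i) = xs (i.+1 %% p)) ->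
  \sum_(i < p) \sum_(b <- letters k (xs i)) k ^ trunc_log k (count_mem b (xs i))
  <= \sum_(i < p) \sum_(b <- letters k (xs i)) trunc_log k (count_mem b (xs i))
     + 2 * \sum_(i < p) size (letters k (xs i)).
Proof.
move=> k_ge2 p_gt0 xs_word xs_cycle.
apply: (@leq_trans (\sum_(i < p) size (xs i))).
  apply: leq_sum => i _; apply: sum_pow_trunc_log_letters => //.
  by case/andP: (xs_word i (ltn_ord i)).
rewrite -(big_ord_succ_mod _ (fun i => size (xs i)) p_gt0) big_distrr -big_split.
by apply: eq_leq; apply: eq_bigr => i _; rewrite -xs_cycle // size_Pk.
Qed.
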